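(* Let $D\subseteq\mathbb C^{n-1}\times\mathbb R$ be a domain and $u:D\times(0,+\infty)\to\mathbb R$, $u=u(x,y',t)$, continuous. Then the function $v(z,t)=y_n-u(x,y',t)$ is a weak solution of $v_t=\mathcal H(v)$ in $(D\times i\mathbb R)\times(0,+\infty)$ if and only if $u$ is a weak solution of $u_t=\mathcal H_0(u)$ in $D\times(0,+\infty)$.
   Context: Coordinates $z_\alpha=x_\alpha+iy_\alpha$ on $\mathbb C^n$, $n\ge2$; $x=(x_1,\dots,x_n)$, $y'=(y_1,\dots,y_{n-1})$, and $\mathbb C^{n-1}\times\mathbb R$ has coordinates $(x,y')$, so $D\times i\mathbb R=\{z:(x,y')\in D\}$. For $v(z,t)$ write $v_\alpha=\partial v/\partial z_\alpha$, $v_{\bar\beta}=\partial v/\partial\bar z_\beta$, $v_{\alpha\bar\beta}=\partial^2v/\partial z_\alpha\partial\bar z_\beta$, $|\partial v|^2=\sum_\alpha|v_\alpha|^2$, and for $C^2$ $v$ with $\partial v\ne0$, $\mathcal H(v)=\sum_{\alpha,\beta}(\delta_{\alpha\beta}-|\partial v|^{-2}v_\alpha v_{\bar\beta})v_{\alpha\bar\beta}$. Weak (viscosity) solutions of $v_t=\mathcal H(v)$: continuous $v$ such that for every $\phi$ smooth near $(z^0,t^0)$ with $v-\phi$ having a local max (resp. min) at $(z^0,t^0)$, $\phi_t\le\mathcal H(\phi)$ (resp. $\ge$) there if $\partial\phi\ne0$, and $\phi_t\le$ (resp. $\ge$) $\sum_{\alpha,\beta}(\delta_{\alpha\beta}-\eta_\alpha\bar\eta_\beta)\phi_{\alpha\bar\beta}$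 for some $|\eta|\le1$ if $\partial\phi=0$. For a $C^2$ function $w=w(x,y')$ (independent of $y_n$) define $\mathcal H_0(w)(x,y')=\mathcal H(w-y_n)$; this is well defined since $\partial(w-y_n)/\partial z_n=\tfrac12(w_{x_n}+i)\neq0$, and it is a degenerate elliptic quasilinear second-order operator in $(x,y')$ (the Levi operator for graphs $y_n=w$). A continuous $u(x,y',t)$ is a weak solution of $u_t=\mathcal H_0(u)$ if for every smooth $\phi(x,y',t)$ such that $u-\phi$ has a local maximum (resp. minimum) at a point, $\phi_t\le\mathcal H_0(\phi)$ (resp. $\phi_t\ge\mathcal H_0(\phi)$) at that point. *)

From Stdlib Require Import Reals ClassicalEpsilon.
From mathcomp Require Import all_boot.
Set Implicit Arguments. Unset Strict Implicit.
Local Open Scope R_scope.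

Definition upd {T : eqType} (p : T -> R) (i : T) (s : R) : T -> R :=
  fun j => if j == i then s else p j.

Definition has_pderiv {T : eqType} (f : (T -> R) -> R) (i : T) (p : T -> R) (l : R) : Prop :=
  derivable_pt_lim (fun s => f (upd p i s)) (p i) l.

(* the partial derivative function (the value is only meaningful where it exists) *)
Definition pderiv {T : eqType} (f : (T -> R) -> R) (i : T) (p : T -> R) : R :=
  epsilon (inhabits 0) (fun l => has_pderiv f i p l).

Definition ball {T : Type} (p : T -> R) (r : R) (q : T -> R) : Prop :=
  forall i, Rabs (q i - p i) < r.

Definition open_set {T : Type} (U : (T -> R) -> Prop) : Prop :=
  forall p, U p -> exists r, 0 < r /\ forall q, ball p r q -> U q.

Definition cont_on {T : Type} (U : (T -> R) -> Prop) (f : (T -> R) -> R) : Prop :=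
  forall p, U p -> forall eps, 0 < eps -> exists d, 0 < d /\
    forall q, U q -> ball p d q -> Rabs (f q - f p) < eps.

Definition connected {T : Type} (U : (T -> R) -> Prop) : Prop :=
  forall A B : (T -> R) -> Prop, open_set A -> open_set B ->
    (forall p, U p -> A p \/ B p) -> (forall p, U p -> A p -> B p -> False) ->
    (exists p, U p /\ A p) -> (exists p, U p /\ B p) -> False.

Definition domain {T : Type} (U : (T -> R) -> Prop) : Prop := open_set U /\ connected U.

Fixpoint Ck {T : eqType} (k : nat) (U : (T -> R) -> Prop) (f : (T -> R) -> R) : Prop :=
  match k with
  | O => cont_on U f
  | S k' => cont_on U f /\ (forall i p, U p -> exists l, has_pderiv f i p l) /\
            (forall i, Ck k' U (pderiv f i))
  end.

Definition smooth_near {T : eqType} (f : (T -> R) -> R) (p : T -> R) : Prop :=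
  exists r, 0 < r /\ forall k, Ck k (ball p r) f.

Definition C := (R * R)%type.
Definition C0 : C := (0, 0).
Definition C1 : C := (1, 0).
Definition Ci : C := (0, 1).
Definition Cadd (a b : C) : C := (fst a + fst b, snd a + snd b).
Definition Csub (a b : C) : C := (fst a - fst b, snd a - snd b).
Definition Cmul (a b : C) : C :=
  (fst a * fst b - snd a * snd b, fst a * snd b + snd a * fst b).
Definition Cscale (r : R) (a : C) : C := (r * fst a, r * snd a).
Definition Cconj (a : C) : C := (fst a, - snd a).
Definition Cnorm2 (a : C) : R := fst a * fst a + snd a * snd a.
Definition Re (a : C) : R := fst a.

Definition sumC (n : nat) (F : 'I_n -> C) : C := foldr Cadd C0 (map F (enum 'I_n)).
Definition sumR (n : nat) (F : 'I_n -> R) : R := foldr Rplus 0 (map F (enum 'I_n)).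

(* real coordinates of C^n: (false, a) = x_a, (true, a) = y_a  (a : 'I_n, 0-based) *)
Definition CT (n : nat) := (bool * 'I_n)%type.
(* space-time coordinates: Some c = spatial coordinate c, None = t *)
Definition STpt (n : nat) := option (CT n) -> R.

Definition xI {n} (a : 'I_n) : option (CT n) := Some (false, a).
Definition yI {n} (a : 'I_n) : option (CT n) := Some (true, a).

Definition dx {n} (a : 'I_n) (f : STpt n -> R) : STpt n -> R := pderiv f (xI a).
Definition dy {n} (a : 'I_n) (f : STpt n -> R) : STpt n -> R := pderiv f (yI a).

(* d/dz_a = (d/dx_a - i d/dy_a)/2 ,  d/dzbar_a = (d/dx_a + i d/dy_a)/2 on real f *)
Definition dz {n} (a : 'I_n) (f : STpt n -> R) (P : STpt n) : C :=
  (dx a f P / 2, - (dy a f P / 2)).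
Definition dzb {n} (a : 'I_n) (f : STpt n -> R) (P : STpt n) : C :=
  (dx a f P / 2, dy a f P / 2).
(* d/dz_a applied to a complex-valued function g = g1 + i g2 *)
Definition dzC {n} (a : 'I_n) (g1 g2 : STpt n -> R) (P : STpt n) : C :=
  Cadd (dz a g1 P) (Cmul Ci (dz a g2 P)).
(* v_{a bbar} = d/dz_a (d/dzbar_b v) *)
Definition hess {n} (a b : 'I_n) (f : STpt n -> R) (P : STpt n) : C :=
  dzC a (fun Q => dx b f Q / 2) (fun Q => dy b f Q / 2) P.

Definition kdelta {n} (a b : 'I_n) : C := if a == b then C1 else C0.

Definition grad2 {n} (f : STpt n -> R) (P : STpt n) : R :=
  sumR (fun a => Cnorm2 (dz a f P)).

(* H(v) = sum_{a,b} (delta_ab - |dv|^{-2} v_a v_bbar) v_{a bbar}  (a real number;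
   we take the real part of the complex sum) *)
Definition LeviH {n} (f : STpt n -> R) (P : STpt n) : R :=
  Re (sumC (fun a => sumC (fun b =>
    Cmul (Csub (kdelta a b) (Cscale (/ grad2 f P) (Cmul (dz a f P) (dzb b f P))))
         (hess a b f P)))).

Definition LeviDeg {n} (eta : 'I_n -> C) (f : STpt n -> R) (P : STpt n) : R :=
  Re (sumC (fun a => sumC (fun b =>
    Cmul (Csub (kdelta a b) (Cmul (eta a) (Cconj (eta b)))) (hess a b f P)))).

Definition dt {T : eqType} (f : (option T -> R) -> R) : (option T -> R) -> R := pderiv f None.

Definition loc_max {T : Type} (Om : (T -> R) -> Prop) (g : (T -> R) -> R) (p0 : T -> R) : Prop :=
  exists r, 0 < r /\ forall p, Om p -> ball p0 r p -> g p <= g p0.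
Definition loc_min {T : Type} (Om : (T -> R) -> Prop) (g : (T -> R) -> R) (p0 : T -> R) : Prop :=
  exists r, 0 < r /\ forall p, Om p -> ball p0 r p -> g p0 <= g p.

Definition weak_sol_H (n : nat) (Om : STpt n -> Prop) (v : STpt n -> R) : Prop :=
  cont_on Om v /\
  forall (phi : STpt n -> R) (P0 : STpt n), Om P0 -> smooth_near phi P0 ->
    (loc_max Om (fun P => v P - phi P) P0 ->
       (grad2 phi P0 <> 0 -> dt phi P0 <= LeviH phi P0) /\
       (grad2 phi P0 = 0 -> exists eta : 'I_n -> C,
           sumR (fun a => Cnorm2 (eta a)) <= 1 /\ dt phi P0 <= LeviDeg eta phi P0)) /\
    (loc_min Om (fun P => v P - phi P) P0 ->
       (grad2 phi P0 <> 0 -> dt phi P0 >= LeviH phi P0) /\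
       (grad2 phi P0 = 0 -> exists eta : 'I_n -> C,
           sumR (fun a => Cnorm2 (eta a)) <= 1 /\ dt phi P0 >= LeviDeg eta phi P0)).

Definition is_yn {n} (c : CT n) : bool := c.1 && (nat_of_ord c.2 == n.-1)%N.
Definition RI (n : nat) := {c : CT n | ~~ is_yn c}.
Definition RSTpt (n : nat) := option (RI n) -> R.

Definition proj {n} (P : STpt n) : RSTpt n := fun o => P (omap val o).
(* (x,y',t) |-> (z,t) with y_n := s *)
Definition lift {n} (Q : RSTpt n) (s : R) : STpt n :=
  fun o => match o with
           | None => Q None
           | Some c => match (insub c : option (RI n)) with
                       | Some c' => Q (Some c')
                       | None => s
                       end
           end.
Definition yn {n} (P : STpt n) : R :=
  match (insub n.-1 : option 'I_n) with Some a => P (yI a) | None => 0 end.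

Definition spatial {n} (P : STpt n) : CT n -> R := fun c => P (Some c).
Definition rspatial {n} (Q : RSTpt n) : RI n -> R := fun c => Q (Some c).

(* H_0(w)(x,y') := H(w - y_n) (evaluated at any z over (x,y'); we take y_n = 0) *)
Definition LeviH0 {n} (w : RSTpt n -> R) (Q : RSTpt n) : R :=
  LeviH (fun P => w (proj P) - yn P) (lift Q 0).

Definition weak_sol_H0 (n : nat) (Om : RSTpt n -> Prop) (u : RSTpt n -> R) : Prop :=
  cont_on Om u /\
  forall (phi : RSTpt n -> R) (Q0 : RSTpt n), Om Q0 -> smooth_near phi Q0 ->
    (loc_max Om (fun Q => u Q - phi Q) Q0 -> dt phi Q0 <= LeviH0 phi Q0) /\
    (loc_min Om (fun Q => u Q - phi Q) Q0 -> dt phi Q0 >= LeviH0 phi Q0).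

(* Both directions transport test functions between the two space-times.
   - (v => u).  For a test function phi(x,y',t) touching u at Q0, the function
     Phi = y_n - phi o proj touches v at any point over Q0, with the extremum
     reversed (v - Phi = (phi - u) o proj).  Since dPhi/dy_n = 1 the gradient
     is non-zero, Phi_t = -phi_t and H(Phi) = -H(phi o proj - y_n) = -H_0(phi).
   - (u => v).  If phi(z,t) touches v at P0, then v - phi has an extremum in
     the y_n direction; as v is affine in y_n with slope 1, phi_{y_n}(P0) = 1,
     so dphi <> 0 and the degenerate clause is vacuous.  Composing phi with the
     affine map L(q) = (q, y_n(P0) + <m, q - proj P0>), whose slope m is read
     off the gradient of phi, gives psi = y_n o L - phi o L - M touching u at
     proj P0 with psi_t = -phi_t and H_0(psi) = -H(phi): the complex Hessian
     of psi differs from that of -phi by terms dphi (x) X + Y (x) dphi, which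
     the Levi projection (delta - |dv|^-2 v_a v_bbar) annihilates.  Thus no
     implicit function theorem is needed. *)
From Pilot Require Import Defs.
From Stdlib Require Import Reals Lra ClassicalEpsilon FunctionalExtensionality.
From mathcomp Require Import all_boot.
Local Open Scope R_scope.
Set Implicit Arguments. Unset Strict Implicit.

Section Points.
Variable T : eqType.
Implicit Types (p q : T -> R).

Lemma upd_same p i s : upd p i s i = s.
Proof. by rewrite /upd eqxx. Qed.

Lemma upd_other p i j s : j != i -> upd p i s j = p j.
Proof. by rewrite /upd => /negbTE ->. Qed.

Lemma upd_id p i : upd p i (p i) = p.
Proof. apply: functional_extensionality => j; rewrite /upd; by case: eqP => // ->. Qed.

Lemma upd_upd p i s t : upd (upd p i s) i t = upd p i t.
Proof. apply: functional_extensionality => j; rewrite /upd; by case: eqP. Qed.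

Lemma ball_center p r : 0 < r -> ball p r p.
Proof. move=> hr i; by rewrite Rminus_diag Rabs_R0. Qed.

Lemma ball_mono p q r1 r2 : r1 <= r2 -> ball p r1 q -> ball p r2 q.
Proof. move=> h b i; have := b i; lra. Qed.

Lemma ball_upd p r i s : 0 < r -> Rabs (s - p i) < r -> ball p r (upd p i s).
Proof.
move=> hr hs j; rewrite /upd; case: eqP => [->//|_].
by rewrite Rminus_diag Rabs_R0.
Qed.

Lemma ball_upd_upd p r j1 j2 a b : 0 < r -> Rabs a < r -> Rabs b < r ->
  ball p r (upd (upd p j1 (p j1 + a)) j2 (p j2 + b)).
Proof.
move=> hr ha hb k; rewrite /upd; case: eqP => [->|_].
  by have -> : p j2 + b - p j2 = b by ring.
case: eqP => [->|_]; last by rewrite Rminus_diag Rabs_R0.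
by have -> : p j1 + a - p j1 = a by ring.
Qed.
End Points.

Lemma fin_margin (T : finType) (F : T -> R) r :
  (forall i, F i < r) -> exists m, m < r /\ forall i, F i <= m.
Proof.
move=> h.
suff: forall s : seq T, exists m, m < r /\ forall i, i \in s -> F i <= m.
  case/(_ (enum T)) => m [hm hi]; exists m; split=> // i; apply: hi; by rewrite mem_enum.
elim=> [|a s [m [hm hi]]]; first by exists (r - 1); split; [lra | by []].
exists (Rmax (F a) m); split; first exact: Rmax_lub_lt.
move=> i; rewrite in_cons => /orP [/eqP ->|/hi him]; first exact: Rmax_l.
exact: Rle_trans him (Rmax_r _ _).
Qed.

Lemma open_ball (T : finType) (p : T -> R) r : Defs.open_set (ball p r).
Proof.
move=> q hq; have [m [hm hi]] := @fin_margin T (fun i => Rabs (q i - p i)) r hq.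
exists (r - m); split=> [|x hx i]; first lra.
have := hi i; have := hx i.
have -> : x i - p i = (x i - q i) + (q i - p i) by ring.
move=> a b; apply: Rle_lt_trans (Rabs_triang _ _) _; lra.
Qed.

Section PartialDerivatives.
Variable T : eqType.
Implicit Types (p q : T -> R) (f g : (T -> R) -> R).

Lemma pderiv_spec f i p : (exists l, has_pderiv f i p l) -> has_pderiv f i p (pderiv f i p).
Proof. move=> h; exact: (epsilon_spec (inhabits 0) _ h). Qed.

Lemma pderiv_eq f i p l : has_pderiv f i p l -> pderiv f i p = l.
Proof. move=> h; exact: uniqueness_limite (pderiv_spec (ex_intro _ l h)) h. Qed.

Lemma has_pderiv_eqv f i p l l' : has_pderiv f i p l -> l = l' -> has_pderiv f i p l'.
Proof. by move=> h <-. Qed.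

Lemma has_pderiv_open f g i p l (U : (T -> R) -> Prop) : Defs.open_set U -> U p ->
  (forall q, U q -> f q = g q) -> has_pderiv f i p l -> has_pderiv g i p l.
Proof.
move=> hU hp he h; have [r [hr hb]] := hU p hp.
apply: (derivable_pt_lim_locally_ext _ _ _ (p i - r) (p i + r) _ _ _ h); first lra.
move=> z hz; apply/he/hb/ball_upd => //; apply: Rabs_def1; lra.
Qed.

Lemma has_pderiv_add f g i p a b : has_pderiv f i p a -> has_pderiv g i p b ->
  has_pderiv (fun q => f q + g q) i p (a + b).
Proof. exact: derivable_pt_lim_plus. Qed.

Lemma has_pderiv_scal c f i p a : has_pderiv f i p a ->
  has_pderiv (fun q => c * f q) i p (c * a).
Proof. exact: derivable_pt_lim_scal. Qed.

Lemma has_pderiv_const c i p : has_pderiv (fun _ => c) i p 0.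
Proof. exact: derivable_pt_lim_const. Qed.

Lemma has_pderiv_coord j i p : has_pderiv (fun q => q j) i p (if j == i then 1 else 0).
Proof.
rewrite /has_pderiv /upd; case: eqP => _.
- exact: derivable_pt_lim_id.
- exact: derivable_pt_lim_const.
Qed.

Lemma has_pderiv_slice f i p c l : has_pderiv f i (upd p i c) l ->
  derivable_pt_lim (fun s => f (upd p i s)) c l.
Proof.
rewrite /has_pderiv upd_same => h.
apply: (derivable_pt_lim_ext _ _ _ _ _ h) => z; by rewrite upd_upd.
Qed.
End PartialDerivatives.

Lemma mvt_any (F F' : R -> R) x y :
  (forall c, Rabs (c - x) <= Rabs (y - x) -> derivable_pt_lim F c (F' c)) ->
  exists c, Rabs (c - x) <= Rabs (y - x) /\ F y - F x = F' c * (y - x).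
Proof.
move=> h; case: (Rtotal_order x y) => [lt|[eq|gt]].
- have [c [e hc]] : exists c, F y - F x = F' c * (y - x) /\ x < c < y.
    apply: MVT_cor2 => // c hc; apply: h; rewrite !Rabs_right; lra.
  exists c; split=> //; rewrite !Rabs_right; lra.
- subst; exists y; split; [rewrite Rminus_diag Rabs_R0; lra | ring].
- have [c [e hc]] : exists c, F x - F y = F' c * (x - y) /\ y < c < x.
    apply: MVT_cor2 => // c hc; apply: h; rewrite !Rabs_left1; lra.
  exists c; split; first by rewrite !Rabs_left1; lra.
  have -> : F y - F x = - (F x - F y) by ring.
  rewrite e; ring.
Qed.

Lemma small_products (a b rho : R) : 0 < rho ->
  exists d, 0 < d /\ forall h, Rabs h < d -> Rabs (a * h) < rho /\ Rabs (b * h) < rho.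
Proof.
move=> hrho; pose K := Rabs a + Rabs b + 1.
have hK : 0 < K by have := Rabs_pos a; have := Rabs_pos b; rewrite /K; lra.
exists (rho / K); split=> [|h hh]; first exact: Rdiv_lt_0_compat.
have hhK : Rabs h * K < rho.
  by move/(Rmult_lt_compat_r K _ _ hK): hh; rewrite /Rdiv Rmult_assoc Rinv_l; lra.
rewrite !Rabs_mult; have := Rabs_pos h; have := Rabs_pos a; have := Rabs_pos b.
by rewrite /K in hhK; split; nra.
Qed.

Section ChainRule.
Variable T : eqType.
Implicit Types (p q : T -> R) (f g : (T -> R) -> R).

Lemma slice_increment f j x s (d : (T -> R) -> R) :
  (forall c, Rabs (c - x j) <= Rabs s -> has_pderiv f j (upd x j c) (d (upd x j c))) ->
  exists c, Rabs (c - x j) <= Rabs s /\ f (upd x j (x j + s)) - f x = d (upd x j c) * s.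
Proof.
have es : x j + s - x j = s by ring.
move=> hd.
have hslice c : Rabs (c - x j) <= Rabs (x j + s - x j) ->
    derivable_pt_lim (fun s => f (upd x j s)) c (d (upd x j c)).
  rewrite es => hc; exact: has_pderiv_slice (hd c hc).
have [c [hc e]] := mvt_any hslice.
by exists c; rewrite es in hc; rewrite upd_id es in e.
Qed.

Lemma line_deriv f j p a d : has_pderiv f j p d ->
  derivable_pt_lim (fun h => f (upd p j (p j + a * h))) 0 (a * d).
Proof.
have hlin : derivable_pt_lim (fun h => p j + a * h) 0 a.
  have := derivable_pt_lim_plus _ _ 0 _ _ (derivable_pt_lim_const (p j) 0)
    (derivable_pt_lim_scal id a 0 1 (derivable_pt_lim_id 0)).
  by rewrite Rplus_0_l Rmult_1_r.
have := derivable_pt_lim_comp _ (fun s => f (upd p j s)) 0 a d hlin.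
rewrite Rmult_0_r Rplus_0_r Rmult_comm; exact.
Qed.

Lemma chain_rule_two_coords f p j1 j2 (a b r : R) (d1 : R) (d2 : (T -> R) -> R) :
  j1 != j2 -> 0 < r ->
  has_pderiv f j1 p d1 ->
  (forall x, ball p r x -> has_pderiv f j2 x (d2 x)) ->
  (forall e, 0 < e -> exists d, 0 < d /\ forall x, ball p d x -> Rabs (d2 x - d2 p) < e) ->
  derivable_pt_lim (fun h => f (upd (upd p j1 (p j1 + a * h)) j2 (p j2 + b * h))) 0
    (a * d1 + b * d2 p).
Proof.
move=> hj hr h1 h2 hc eps heps.
pose ph h := upd p j1 (p j1 + a * h).
have hA : derivable_pt_lim (fun h => f (ph h)) 0 (a * d1) by exact: line_deriv.
have hb0 := Rabs_pos b.
have [[del1 hdel1] HA] := hA (eps / 2) ltac:(lra).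
have [del2 [hdel2 Hc]] := hc (eps / (2 * (Rabs b + 1))) ltac:(apply: Rdiv_lt_0_compat; lra).
pose rho := Rmin r del2.
have hrho : 0 < rho by apply: Rmin_glb_lt.
have [del3 [hdel3 Hsmall]] := small_products a b hrho.
have hdel : 0 < Rmin del1 del3 by apply: Rmin_glb_lt.
exists (mkposreal _ hdel) => h hh0 /= hh.
have hh1 : Rabs h < del1 by have := Rmin_l del1 del3; lra.
have [hah hbh] := Hsmall h ltac:(have := Rmin_r del1 del3; lra).
have phj2 : ph h j2 = p j2 by rewrite /ph upd_other // eq_sym.
have [c [hcb hmvt]] : exists c, Rabs (c - ph h j2) <= Rabs (b * h) /\
    f (upd (ph h) j2 (ph h j2 + b * h)) - f (ph h) = d2 (upd (ph h) j2 c) * (b * h).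
  apply: slice_increment => c hcc; apply/h2/(ball_mono (Rmin_l r del2 : rho <= r)).
  rewrite (_ : c = p j2 + (c - p j2)); last ring.
  apply: ball_upd_upd => //; rewrite -phj2; lra.
have hnear : ball p del2 (upd (ph h) j2 c).
  apply: (ball_mono (Rmin_r r del2 : rho <= del2)); rewrite (_ : c = p j2 + (c - p j2)); last ring.
  by apply: ball_upd_upd => //; rewrite phj2 in hcb; lra.
have HA2 := HA h hh0 hh1; rewrite /ph Rplus_0_l Rmult_0_r Rplus_0_r upd_id -/(ph h) in HA2.
rewrite phj2 in hmvt; rewrite Rplus_0_l !Rmult_0_r !Rplus_0_r !upd_id -/(ph h).
have -> : (f (upd (ph h) j2 (p j2 + b * h)) - f p) / h - (a * d1 + b * d2 p)
   = ((f (ph h) - f p) / h - a * d1) + b * (d2 (upd (ph h) j2 c) - d2 p).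
  have -> : f (upd (ph h) j2 (p j2 + b * h)) = f (ph h) + d2 (upd (ph h) j2 c) * (b * h) by lra.
  by field.
apply: Rle_lt_trans (Rabs_triang _ _) _; rewrite Rabs_mult.
have := Hc _ hnear.
have : Rabs b * (eps / (2 * (Rabs b + 1))) < eps / 2.
  apply: (Rmult_lt_reg_r (2 * (Rabs b + 1))); first lra.
  field_simplify; lra.
have := Rabs_pos (d2 (upd (ph h) j2 c) - d2 p); nra.
Qed.
End ChainRule.

Section Smoothness.
Variable T : eqType.
Implicit Types (p q : T -> R) (f g : (T -> R) -> R) (U : (T -> R) -> Prop).

Lemma cont_on_ext U f g : (forall p, U p -> f p = g p) -> cont_on U f -> cont_on U g.
Proof.
move=> he hc p hp e he0; have [d [hd H]] := hc p hp e he0.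
exists d; split=> // q hq hb; rewrite -!he //; exact: H.
Qed.

Lemma cont_on_add U f g : cont_on U f -> cont_on U g -> cont_on U (fun p => f p + g p).
Proof.
move=> h1 h2 p hp e he.
have [d1 [hd1 H1]] := h1 p hp (e / 2) ltac:(lra).
have [d2 [hd2 H2]] := h2 p hp (e / 2) ltac:(lra).
exists (Rmin d1 d2); split=> [|q hq hb]; first exact: Rmin_glb_lt.
have := H1 q hq (ball_mono (Rmin_l _ _) hb); have := H2 q hq (ball_mono (Rmin_r _ _) hb).
have -> : f q + g q - (f p + g p) = (f q - f p) + (g q - g p) by ring.
move=> a b; apply: Rle_lt_trans (Rabs_triang _ _) _; lra.
Qed.

Lemma cont_on_scal U c f : cont_on U f -> cont_on U (fun p => c * f p).
Proof.
move=> h p hp e he; have hc := Rabs_pos c.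
have [d [hd H]] := h p hp (e / (Rabs c + 1)) ltac:(apply: Rdiv_lt_0_compat; lra).
exists d; split=> // q hq hb; have := H q hq hb.
rewrite -Rmult_minus_distr_l Rabs_mult => H'.
have : Rabs c * (e / (Rabs c + 1)) < e.
  apply: (Rmult_lt_reg_r (Rabs c + 1)); first lra.
  field_simplify; lra.
have := Rabs_pos (f q - f p); nra.
Qed.

Lemma cont_on_const U c : cont_on U (fun _ => c).
Proof. move=> p hp e he; exists 1; split=> [|*]; [lra | by rewrite Rminus_diag Rabs_R0]. Qed.

Lemma cont_on_coord U j : cont_on U (fun p => p j).
Proof. move=> p hp e he; exists e; split=> // q hq hb; exact: hb j. Qed.

Lemma Ck_cont k U f : Ck k U f -> cont_on U f.
Proof. by case: k => [|k] //= []. Qed.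

Lemma Ck_S k U f : Ck k.+1 U f -> Ck k U f.
Proof.
elim: k f => [|k IH] f /=; first by case.
move=> [hc [hd hk]]; split=> //; split=> // i; exact: IH.
Qed.

Lemma Ck1_pderiv k U f i p : U p -> Ck k.+1 U f -> has_pderiv f i p (pderiv f i p).
Proof. move=> hp [_ [hd _]]; apply: pderiv_spec; exact: hd. Qed.

Lemma Ck_pderiv k U f i : Ck k.+1 U f -> Ck k U (pderiv f i).
Proof. by move=> [_ [_ hk]]; exact: hk. Qed.

Lemma Ck_ext k U f g : Defs.open_set U -> (forall p, U p -> f p = g p) -> Ck k U f -> Ck k U g.
Proof.
move=> hU; elim: k f g => [|k IH] f g he /=; first exact: cont_on_ext.
move=> [hc [hd hk]]; split; first exact: cont_on_ext hc.
split=> [i p hp|i].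
  have [l hl] := hd i p hp; exists l; exact: has_pderiv_open hU hp he hl.
apply: (IH (pderiv f i)) (hk i) => p hp; have [l hl] := hd i p hp.
by rewrite (pderiv_eq hl) (pderiv_eq (has_pderiv_open hU hp he hl)).
Qed.

Lemma Ck_add k U f g : Defs.open_set U -> Ck k U f -> Ck k U g -> Ck k U (fun p => f p + g p).
Proof.
move=> hU; elim: k f g => [|k IH] f g /=; first exact: cont_on_add.
move=> [hc1 [hd1 hk1]] [hc2 [hd2 hk2]]; split; first exact: cont_on_add.
split=> [i p hp|i].
  have [l1 h1] := hd1 i p hp; have [l2 h2] := hd2 i p hp.
  exists (l1 + l2); exact: has_pderiv_add.
apply: (Ck_ext hU _ (IH _ _ (hk1 i) (hk2 i))) => p hp.
have [l1 h1] := hd1 i p hp; have [l2 h2] := hd2 i p hp.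
by rewrite (pderiv_eq h1) (pderiv_eq h2) (pderiv_eq (has_pderiv_add h1 h2)).
Qed.

Lemma Ck_scal k U c f : Defs.open_set U -> Ck k U f -> Ck k U (fun p => c * f p).
Proof.
move=> hU; elim: k f => [|k IH] f /=; first exact: cont_on_scal.
move=> [hc1 [hd1 hk1]]; split; first exact: cont_on_scal.
split=> [i p hp|i].
  have [l1 h1] := hd1 i p hp; exists (c * l1); exact: has_pderiv_scal.
apply: (Ck_ext hU _ (IH _ (hk1 i))) => p hp; have [l1 h1] := hd1 i p hp.
by rewrite (pderiv_eq h1) (pderiv_eq (has_pderiv_scal c h1)).
Qed.

Lemma Ck_const k U c : Ck k U (fun _ => c).
Proof.
elim: k c => [|k IH] c /=; first exact: cont_on_const.
split; first exact: cont_on_const.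
split=> [i p _|i]; first by exists 0; exact: has_pderiv_const.
have -> : pderiv (fun _ : T -> R => c) i = fun _ => 0.
  apply: functional_extensionality => p; apply: pderiv_eq; exact: has_pderiv_const.
exact: IH.
Qed.

Lemma Ck_coord k U j : Ck k U (fun p => p j).
Proof.
case: k => [|k] /=; first exact: cont_on_coord.
split; first exact: cont_on_coord.
split=> [i p _|i]; first by eexists; exact: has_pderiv_coord.
have -> : pderiv (fun p : T -> R => p j) i = fun _ => if j == i then 1 else 0.
  apply: functional_extensionality => p; apply: pderiv_eq; exact: has_pderiv_coord.
exact: Ck_const.
Qed.
End Smoothness.

(* Composition with a map L that moves each coordinate i of its argument into
   two distinct coordinates j1 i and j2 i of its value, at rates a i and b i
   (both proj and the affine lift of the graph construction are of this
   kind). *)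
Section TwoCoordinateMaps.
Variables (T1 T2 : eqType) (L : (T1 -> R) -> (T2 -> R)).
Variables (U : (T1 -> R) -> Prop) (V : (T2 -> R) -> Prop).
Variables (j1 j2 : T1 -> T2) (a b : T1 -> R).
Hypothesis hU : Defs.open_set U.
Hypothesis hV : Defs.open_set V.
Hypothesis hUV : forall q, U q -> V (L q).
Hypothesis hLcont : forall q e, 0 < e ->
  exists d, 0 < d /\ forall q', ball q d q' -> ball (L q) e (L q').
Hypothesis hLshape : forall i q h, L (upd q i (q i + h)) =
  upd (upd (L q) (j1 i) (L q (j1 i) + a i * h)) (j2 i) (L q (j2 i) + b i * h).
Hypothesis hj : forall i, j1 i != j2 i.

Lemma cont_on_comp f : cont_on V f -> cont_on U (fun q => f (L q)).
Proof.
move=> hc p hp e he; have [d [hd H]] := hc (L p) (hUV hp) e he.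
have [d' [hd' H']] := hLcont p hd.
exists d'; split=> // q hq hb; exact: H (hUV hq) (H' _ hb).
Qed.

Lemma comp_deriv k f i q : U q -> Ck k.+1 V f ->
  has_pderiv (fun q => f (L q)) i q
    (a i * pderiv f (j1 i) (L q) + b i * pderiv f (j2 i) (L q)).
Proof.
move=> hq hf; have [r [hr hb]] := hV (hUV hq).
have hcont e : 0 < e -> exists d, 0 < d /\
    forall x, ball (L q) d x -> Rabs (pderiv f (j2 i) x - pderiv f (j2 i) (L q)) < e.
  move=> he; have [d [hd H]] := Ck_cont (Ck_pderiv (j2 i) hf) (hUV hq) he.
  exists (Rmin d r); split=> [|x hx]; first exact: Rmin_glb_lt.
  apply: H; [exact/hb/(ball_mono (Rmin_r _ _) hx) | exact: ball_mono (Rmin_l _ _) hx].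
move=> e he; have [d hd] := chain_rule_two_coords (a i) (b i) (hj i) hr (Ck1_pderiv (j1 i) (hUV hq) hf)
  (fun x hx => Ck1_pderiv (j2 i) (hb _ hx) hf) hcont he.
exists d => h h0 hh; rewrite hLshape upd_id; move: (hd h h0 hh).
by rewrite Rplus_0_l !Rmult_0_r !Rplus_0_r !upd_id.
Qed.

Lemma pderiv_comp k f i q : U q -> Ck k.+1 V f ->
  pderiv (fun q => f (L q)) i q = a i * pderiv f (j1 i) (L q) + b i * pderiv f (j2 i) (L q).
Proof. move=> hq hf; apply: pderiv_eq; exact: comp_deriv hq hf. Qed.

Lemma Ck_comp k f : Ck k V f -> Ck k U (fun q => f (L q)).
Proof.
elim: k f => [|k IH] f; first exact: cont_on_comp.
move=> hf; have [hc [_ hk]] := hf; split; first exact: cont_on_comp.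
split=> [i p hp|i]; first by eexists; exact: comp_deriv hp hf.
apply: (Ck_ext hU (f := fun q => a i * pderiv f (j1 i) (L q) + b i * pderiv f (j2 i) (L q))).
  by move=> p hp; rewrite (pderiv_comp _ hp hf).
by apply: Ck_add hU _ _; apply: Ck_scal hU _; apply: IH; exact: hk.
Qed.

Lemma comp_d2 k f i i' q : U q -> Ck k.+2 V f ->
  has_pderiv (pderiv (fun q => f (L q)) i) i' q
    (a i * (a i' * pderiv (pderiv f (j1 i)) (j1 i') (L q)
            + b i' * pderiv (pderiv f (j1 i)) (j2 i') (L q))
   + b i * (a i' * pderiv (pderiv f (j2 i)) (j1 i') (L q)
            + b i' * pderiv (pderiv f (j2 i)) (j2 i') (L q))).
Proof.
move=> hq hf.
apply: (has_pderiv_open hU hq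
  (f := fun q => a i * pderiv f (j1 i) (L q) + b i * pderiv f (j2 i) (L q))).
  by move=> p hp; rewrite (pderiv_comp _ hp (Ck_S hf)).
by apply: has_pderiv_add; apply: has_pderiv_scal; apply: comp_deriv hq (Ck_pderiv _ hf).
Qed.
End TwoCoordinateMaps.

Definition sumL {T : Type} (s : seq T) (F : T -> R) : R := foldr (fun x acc => F x + acc) 0 s.

Section RealSums.
Variable T : Type.
Implicit Types (s : seq T) (F G : T -> R).

Lemma sumL_ext s F G : (forall x, F x = G x) -> sumL s F = sumL s G.
Proof. move=> h; elim: s => //= x s ->; by rewrite h. Qed.

Lemma sumL_zero s : sumL s (fun _ => 0) = 0.
Proof. by elim: s => //= x s ->; ring. Qed.

Lemma sumL_add s F G : sumL s (fun x => F x + G x) = sumL s F + sumL s G.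
Proof. elim: s => /= [|x s ->]; ring. Qed.

Lemma sumL_scal s c F : sumL s (fun x => c * F x) = c * sumL s F.
Proof. elim: s => /= [|x s ->]; ring. Qed.

Lemma sumL_abs s F : Rabs (sumL s F) <= sumL s (fun x => Rabs (F x)).
Proof.
elim: s => /= [|x s IH]; first by rewrite Rabs_R0; lra.
apply: Rle_trans (Rabs_triang _ _) _; lra.
Qed.

Lemma sumL_le s F G : (forall x, F x <= G x) -> sumL s F <= sumL s G.
Proof. move=> h; elim: s => /= [|x s IH]; [lra | have := h x; lra]. Qed.

Lemma sumL_ge0 s F : (forall x, 0 <= F x) -> 0 <= sumL s F.
Proof. move=> h; elim: s => /= [|x s IH]; [lra | have := h x; lra]. Qed.
End RealSums.

Lemma sumL_term {T : eqType} (s : seq T) (F : T -> R) a :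
  a \in s -> (forall x, 0 <= F x) -> F a <= sumL s F.
Proof.
move=> ha h0; elim: s ha => //= x s IH; rewrite in_cons => /orP [/eqP ->|hi].
  have := sumL_ge0 s h0; lra.
have := IH hi; have := h0 x; lra.
Qed.

Lemma sumL_delta {T : eqType} (s : seq T) (a : T) (X : R) : uniq s -> a \in s ->
  sumL s (fun x => if x == a then X else 0) = X.
Proof.
elim: s => //= x s IH /andP [hx hu]; rewrite in_cons => /orP [/eqP e|hi].
  subst x; rewrite eqxx; suff -> : sumL s (fun x => if x == a then X else 0) = 0 by ring.
  elim: s hx {IH hu} => //= y s IH; rewrite in_cons negb_or => /andP [h1 h2].
  by rewrite eq_sym (negbTE h1) IH //; ring.
rewrite IH //; case: eqP => [e|_]; last ring.
by subst x; rewrite hi in hx.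
Qed.

Definition Copp (a : Defs.C) : Defs.C := (- fst a, - snd a).

Lemma C_ring : ring_theory Defs.C0 Defs.C1 Cadd Cmul Csub Copp (@eq Defs.C).
Proof.
split=> *; rewrite /Defs.C0 /Defs.C1 /Cadd /Cmul /Csub /Copp /=;
  repeat match goal with x : Defs.C |- _ => destruct x end; simpl; f_equal; ring.
Qed.
Add Ring Cring : C_ring.

Lemma C_eq (a b : Defs.C) : fst a = fst b -> snd a = snd b -> a = b.
Proof. case: a => ? ?; case: b => ? ? /= -> -> //. Qed.

Definition sumCL {T : Type} (s : seq T) (F : T -> Defs.C) : Defs.C :=
  foldr (fun x acc => Cadd (F x) acc) Defs.C0 s.

Lemma sumC_L n (F : 'I_n -> Defs.C) : sumC F = sumCL (enum 'I_n) F.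
Proof. by rewrite /sumC; elim: (enum 'I_n) => //= x s ->. Qed.

Lemma sumR_L n (F : 'I_n -> R) : sumR F = sumL (enum 'I_n) F.
Proof. by rewrite /sumR; elim: (enum 'I_n) => //= x s ->. Qed.

Section ComplexSums.
Variable T : Type.
Implicit Types (s : seq T) (F G : T -> Defs.C).

Lemma sumCL_ext s F G : (forall x, F x = G x) -> sumCL s F = sumCL s G.
Proof. move=> h; elim: s => //= x s ->; by rewrite h. Qed.

Lemma sumCL_add s F G : sumCL s (fun x => Cadd (F x) (G x)) = Cadd (sumCL s F) (sumCL s G).
Proof. elim: s => /= [|x s ->]; ring. Qed.

Lemma sumCL_mull s c F : sumCL s (fun x => Cmul c (F x)) = Cmul c (sumCL s F).
Proof. elim: s => /= [|x s ->]; ring. Qed.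

Lemma sumCL_opp s F : sumCL s (fun x => Copp (F x)) = Copp (sumCL s F).
Proof. elim: s => /= [|x s ->]; ring. Qed.

Lemma sumCL_norm s F :
  sumCL s (fun x => Cmul (F x) (Cconj (F x))) = (sumL s (fun x => Cnorm2 (F x)), 0).
Proof. elim: s => /= [|x s ->] //; apply: C_eq; rewrite /Cmul /Cconj /Cnorm2 /=; ring. Qed.
End ComplexSums.

Lemma sumCL_delta {T : eqType} (s : seq T) a (F : T -> Defs.C) : uniq s -> a \in s ->
  sumCL s (fun x => Cmul (if a == x then Defs.C1 else Defs.C0) (F x)) = F a.
Proof.
elim: s => //= x s IH /andP [hx hu]; rewrite in_cons => /orP [/eqP e|hi].
  subst x; rewrite eqxx.
  suff -> : sumCL s (fun x => Cmul (if a == x then Defs.C1 else Defs.C0) (F x)) = Defs.C0 by ring.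
  elim: s hx {IH hu} => //= y s IH; rewrite in_cons negb_or => /andP [h1 h2].
  by rewrite (negbTE h1) IH //; ring.
rewrite IH //; case: eqP => [e|_]; last ring.
by subst x; rewrite hi in hx.
Qed.

(* The Levi form as an algebraic expression: for a "gradient" Z, its
   conjugate Zb, the squared norm g2 and a complex Hessian Hs,
   Re sum_(a,b) (delta_ab - g2^-1 Z_a Zb_b) Hs_ab. *)
Section LeviForm.
Variable n : nat.

Definition levi_form (Z Zb : 'I_n -> Defs.C) (g2 : R) (Hs : 'I_n -> 'I_n -> Defs.C) : R :=
  Re (sumC (fun a => sumC (fun b =>
    Cmul (Csub (kdelta a b) (Cscale (/ g2) (Cmul (Z a) (Zb b)))) (Hs a b)))).

Lemma sumC_ext (F G : 'I_n -> Defs.C) : (forall x, F x = G x) -> sumC F = sumC G.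
Proof. rewrite !sumC_L; exact: sumCL_ext. Qed.

Lemma sumC_add (F G : 'I_n -> Defs.C) : sumC (fun x => Cadd (F x) (G x)) = Cadd (sumC F) (sumC G).
Proof. rewrite !sumC_L; exact: sumCL_add. Qed.

Lemma sumC_mull c (F : 'I_n -> Defs.C) : sumC (fun x => Cmul c (F x)) = Cmul c (sumC F).
Proof. rewrite !sumC_L; exact: sumCL_mull. Qed.

Lemma sumC_opp (F : 'I_n -> Defs.C) : sumC (fun x => Copp (F x)) = Copp (sumC F).
Proof. rewrite !sumC_L; exact: sumCL_opp. Qed.

Lemma sumC_delta a (F : 'I_n -> Defs.C) : sumC (fun x => Cmul (kdelta a x) (F x)) = F a.
Proof. rewrite sumC_L; apply: sumCL_delta; [exact: enum_uniq | exact: mem_enum]. Qed.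

Lemma sumC_norm (F : 'I_n -> Defs.C) :
  sumC (fun x => Cmul (F x) (Cconj (F x))) = (sumR (fun x => Cnorm2 (F x)), 0).
Proof. rewrite sumC_L sumR_L; exact: sumCL_norm. Qed.

Lemma levi_form_add Z Zb g2 H1 H2 :
  levi_form Z Zb g2 (fun a b => Cadd (H1 a b) (H2 a b)) = levi_form Z Zb g2 H1 + levi_form Z Zb g2 H2.
Proof.
rewrite /levi_form -[RHS]/(Re (Cadd _ _)) -sumC_add; congr Re; apply: sumC_ext => a.
by rewrite -sumC_add; apply: sumC_ext => b; ring.
Qed.

Lemma levi_form_opp Z Zb g2 H :
  levi_form Z Zb g2 (fun a b => Copp (H a b)) = - levi_form Z Zb g2 H.
Proof.
rewrite /levi_form -[RHS]/(Re (Copp _)) -sumC_opp; congr Re; apply: sumC_ext => a.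
by rewrite -sumC_opp; apply: sumC_ext => b; ring.
Qed.

Lemma levi_form_oppZ Z Zb g2 H :
  levi_form (fun a => Copp (Z a)) (fun b => Copp (Zb b)) g2 H = levi_form Z Zb g2 H.
Proof.
rewrite /levi_form; congr Re; apply: sumC_ext => a; apply: sumC_ext => b.
by have -> : Cmul (Copp (Z a)) (Copp (Zb b)) = Cmul (Z a) (Zb b) by ring.
Qed.

Lemma levi_form_rank1 Z Zb g2 (X Y : 'I_n -> Defs.C) :
  levi_form Z Zb g2 (fun a b => Cmul (X a) (Y b)) =
  Re (Csub (sumC (fun a => Cmul (X a) (Y a)))
        (Cscale (/ g2) (Cmul (sumC (fun a => Cmul (Z a) (X a))) (sumC (fun b => Cmul (Zb b) (Y b)))))).
Proof.
rewrite /levi_form.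
have inner a : sumC (fun b => Cmul (Csub (kdelta a b) (Cscale (/ g2) (Cmul (Z a) (Zb b)))) (Cmul (X a) (Y b)))
  = Cadd (Cmul (X a) (Y a))
         (Cmul (Copp (Cscale (/ g2) (Cmul (Z a) (X a)))) (sumC (fun b => Cmul (Zb b) (Y b)))).
  rewrite -sumC_mull -(sumC_delta a (fun b => Cmul (X a) (Y b))) -sumC_add.
  apply: sumC_ext => b; rewrite /Cscale /Copp /kdelta.
  by case: (a == b); apply: C_eq; rewrite /Cmul /Cadd /Csub /=; ring.
rewrite (sumC_ext inner) sumC_add.
have -> : (fun a => Cmul (Copp (Cscale (/ g2) (Cmul (Z a) (X a)))) (sumC (fun b => Cmul (Zb b) (Y b))))
   = (fun a => Cmul (Copp (Cscale (/ g2) (sumC (fun b => Cmul (Zb b) (Y b))))) (Cmul (Z a) (X a))).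
  by apply: functional_extensionality => a; apply: C_eq; rewrite /Cmul /Copp /Cscale /=; ring.
by rewrite sumC_mull /Re /Cadd /Csub /Cmul /Copp /Cscale /=; ring.
Qed.

Lemma levi_form_kill_left (Z : 'I_n -> Defs.C) Y :
  sumR (fun a => Cnorm2 (Z a)) <> 0 ->
  levi_form Z (fun b => Cconj (Z b)) (sumR (fun a => Cnorm2 (Z a)))
    (fun a b => Cmul (Cconj (Z a)) (Y b)) = 0.
Proof.
move=> h; rewrite levi_form_rank1.
have -> : sumC (fun a => Cmul (Z a) (Cconj (Z a))) = (sumR (fun a => Cnorm2 (Z a)), 0) by exact: sumC_norm.
by rewrite /Re /Csub /Cscale /Cmul /=; field.
Qed.

Lemma levi_form_kill_right (Z : 'I_n -> Defs.C) X :
  sumR (fun a => Cnorm2 (Z a)) <> 0 ->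
  levi_form Z (fun b => Cconj (Z b)) (sumR (fun a => Cnorm2 (Z a)))
    (fun a b => Cmul (X a) (Z b)) = 0.
Proof.
move=> h; rewrite levi_form_rank1.
have -> : sumC (fun b => Cmul (Cconj (Z b)) (Z b)) = (sumR (fun a => Cnorm2 (Z a)), 0).
  by rewrite -sumC_norm; apply: sumC_ext => b; ring.
have -> : sumC (fun a => Cmul (Z a) (X a)) = sumC (fun a => Cmul (X a) (Z a)).
  by apply: sumC_ext => a; ring.
by rewrite /Re /Csub /Cscale /Cmul /=; field.
Qed.
End LeviForm.

(* The Levi operator in terms of the real gradient d1 and the real Hessian d2
   (d2 c c' = d/dc d/dc' f) on the real coordinates of C^n. *)
Section LeviReal.
Variable n : nat.

(* The (1,0)-part (l(x_a) - i l(y_a))/2 of a real covector l. *)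
Definition zvec (l : CT n -> R) (a : 'I_n) : Defs.C := (l (false, a) / 2, - (l (true, a) / 2)).

Definition zhess (d2 : CT n -> CT n -> R) (a b : 'I_n) : Defs.C :=
  Cadd (d2 (false, a) (false, b) / 2 / 2, - (d2 (true, a) (false, b) / 2 / 2))
       (Cmul Ci (d2 (false, a) (true, b) / 2 / 2, - (d2 (true, a) (true, b) / 2 / 2))).

Definition levi_real (d1 : CT n -> R) (d2 : CT n -> CT n -> R) : R :=
  levi_form (zvec d1) (fun b => Cconj (zvec d1 b)) (sumR (fun a => Cnorm2 (zvec d1 a))) (zhess d2).

Lemma has_pderiv_half {T : eqType} (g : (T -> R) -> R) i p l :
  has_pderiv g i p l -> has_pderiv (fun q => g q / 2) i p (l / 2).
Proof.
move/(has_pderiv_scal (/ 2)); rewrite /Rdiv Rmult_comm.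
by have -> : (fun q => / 2 * g q) = (fun q => g q * / 2)
  by apply: functional_extensionality => q; ring.
Qed.

Lemma LeviH_real (f : STpt n -> R) P (d2 : CT n -> CT n -> R) :
  (forall c c', has_pderiv (pderiv f (Some c')) (Some c) P (d2 c c')) ->
  LeviH f P = levi_real (fun c => pderiv f (Some c) P) d2.
Proof.
move=> hd; rewrite /LeviH /levi_real -/(levi_form _ _ _ _).
have -> : (fun a => dzb a f P) = (fun b => Cconj (zvec (fun c => pderiv f (Some c) P) b)).
  apply: functional_extensionality => b; by rewrite /dzb /Cconj /zvec /= Ropp_involutive.
have -> // : (fun a b => hess a b f P) = zhess d2.
apply: functional_extensionality => a; apply: functional_extensionality => b.
rewrite /hess /dzC /dz /dx /dy /zhess /xI /yI.
by rewrite !(pderiv_eq (has_pderiv_half (hd _ _))).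
Qed.

Lemma levi_real_opp (d1 : CT n -> R) (d2 : CT n -> CT n -> R) :
  levi_real (fun c => - d1 c) (fun c c' => - d2 c c') = - levi_real d1 d2.
Proof.
rewrite /levi_real -levi_form_opp.
have -> : zvec (fun c => - d1 c) = (fun a => Copp (zvec d1 a)).
  by apply: functional_extensionality => a; apply: C_eq; rewrite /zvec /Copp /=; field.
have -> : (fun a => Cnorm2 (Copp (zvec d1 a))) = (fun a => Cnorm2 (zvec d1 a)).
  by apply: functional_extensionality => a; rewrite /Cnorm2 /Copp /=; ring.
have -> : (fun b => Cconj (Copp (zvec d1 b))) = (fun b => Copp (Cconj (zvec d1 b))).
  by apply: functional_extensionality => b; apply: C_eq; rewrite /Cconj /Copp.
rewrite levi_form_oppZ; congr levi_form.
apply: functional_extensionality => a; apply: functional_extensionality => b.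
by apply: C_eq; rewrite /zhess /Copp /Cadd /Cmul /Ci /=; field.
Qed.

Lemma zhess_rank1 (al be : CT n -> R) a b :
  zhess (fun c c' => al c * be c') a b = Cmul (zvec al a) (Cconj (zvec be b)).
Proof. by apply: C_eq; rewrite /zhess /zvec /Cadd /Cmul /Ci /Cconj /=; field. Qed.

Lemma zhess_add (d2 e2 : CT n -> CT n -> R) a b :
  zhess (fun c c' => d2 c c' + e2 c c') a b = Cadd (zhess d2 a b) (zhess e2 a b).
Proof. by apply: C_eq; rewrite /zhess /Cadd /Cmul /Ci /=; field. Qed.

(* Key invariance: if l is the gradient d1 with its y-components negated
   (so that zvec l = conj (zvec d1)), adding l (x) rr + cc (x) l + pyy l (x) l
   to the real Hessian does not change the Levi operator. *)
Lemma levi_real_rank1_invariant (d1 : CT n -> R) (d2 : CT n -> CT n -> R) (l rr cc : CT n -> R) pyy :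
  (forall a, l (false, a) = d1 (false, a)) -> (forall a, l (true, a) = - d1 (true, a)) ->
  sumR (fun a => Cnorm2 (zvec d1 a)) <> 0 ->
  levi_real d1 (fun c c' => d2 c c' + l c * rr c' + cc c * l c' + pyy * l c * l c') = levi_real d1 d2.
Proof.
move=> hx hy hg; rewrite /levi_real.
have hl a : zvec l a = Cconj (zvec d1 a).
  by apply: C_eq; rewrite /zvec /Cconj /= ?hx ?hy; field.
have hl' b : Cconj (zvec l b) = zvec d1 b.
  by apply: C_eq; rewrite /zvec /Cconj /= ?hx ?hy; field.
rewrite (_ : zhess _ = fun a b => Cadd (Cadd (Cadd (zhess d2 a b)
     (Cmul (Cconj (zvec d1 a)) (Cconj (zvec rr b))))
     (Cmul (zvec cc a) (zvec d1 b)))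
     (Cmul (zvec (fun c => pyy * l c) a) (zvec d1 b))).
  rewrite !levi_form_add levi_form_kill_left // !levi_form_kill_right //; ring.
apply: functional_extensionality => a; apply: functional_extensionality => b.
rewrite (zhess_add (fun c c' => d2 c c' + l c * rr c' + cc c * l c')).
rewrite (zhess_add (fun c c' => d2 c c' + l c * rr c')) zhess_add !zhess_rank1.
by rewrite hl hl'.
Qed.
End LeviReal.

Section Coordinates.
Variable n : nat.
Hypothesis hn : (2 <= n)%N.

Lemma last_idx_lt : (n.-1 < n)%N.
Proof. by case: n hn. Qed.
Definition last_idx : 'I_n := Ordinal last_idx_lt.

Definition yn_coord : CT n := (true, last_idx).
Definition xn_coord : RI n := exist _ ((false, last_idx) : CT n) isT.

Lemma is_yn_coord c : is_yn c = (c == yn_coord).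
Proof. by case: c => [[] b]. Qed.

Lemma val_neq_yn (c : RI n) : (Some (val c) == Some yn_coord :> option (CT n)) = false.
Proof.
apply/negbTE; rewrite (inj_eq (@Some_inj _)) -is_yn_coord; exact: (valP c).
Qed.

Lemma CT_cases (c : CT n) : c = yn_coord \/ exists c' : RI n, c = val c'.
Proof.
case h: (is_yn c); first by left; apply/eqP; rewrite -is_yn_coord.
right; have h' : ~~ is_yn c by rewrite h.
by exists (exist _ c h').
Qed.

Lemma insub_val (c : RI n) : (insub (val c) : option (RI n)) = Some c.
Proof. exact: valK. Qed.

Lemma insub_yn : (insub yn_coord : option (RI n)) = None.
Proof. by apply: insubN; rewrite is_yn_coord eqxx. Qed.

Lemma yn_eq (P : STpt n) : yn P = P (Some yn_coord).
Proof. by rewrite /yn (insubT (fun i => (i < n)%N) last_idx_lt). Qed.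

Lemma lift_val (Q : RSTpt n) s (c : RI n) : Defs.lift Q s (Some (val c)) = Q (Some c).
Proof. by rewrite /Defs.lift insub_val. Qed.

Lemma lift_yn (Q : RSTpt n) s : Defs.lift Q s (Some yn_coord) = s.
Proof. by rewrite /Defs.lift insub_yn. Qed.

Lemma proj_lift (Q : RSTpt n) s : proj (Defs.lift Q s) = Q.
Proof. by apply: functional_extensionality => -[c|] //; exact: lift_val. Qed.

Lemma lift_proj (P : STpt n) : Defs.lift (proj P) (yn P) = P.
Proof.
apply: functional_extensionality => -[c|] //.
by case: (CT_cases c) => [->|[c' ->]]; [rewrite lift_yn yn_eq | rewrite lift_val].
Qed.

Lemma proj_upd_yn (P : STpt n) s : proj (upd P (Some yn_coord) s) = proj P.
Proof.
by apply: functional_extensionality => -[o|] //; rewrite /proj /= upd_other // val_neq_yn.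
Qed.

Lemma yn_upd_yn (P : STpt n) s : yn (upd P (Some yn_coord) s) = s.
Proof. by rewrite yn_eq upd_same. Qed.

Lemma grad2_neq0 (f : STpt n -> R) P : pderiv f (Some yn_coord) P <> 0 -> grad2 f P <> 0.
Proof.
move=> h; rewrite /grad2 sumR_L => E.
have := @sumL_term _ (enum 'I_n) (fun a => Cnorm2 (dz a f P)) last_idx (mem_enum _ _).
have : 0 < Cnorm2 (dz last_idx f P).
  have : 0 < (pderiv f (Some yn_coord) P / 2) * (pderiv f (Some yn_coord) P / 2).
    by apply: Rsqr_pos_lt => e; apply: h; lra.
  rewrite /Cnorm2 /dz /dy /yI /= Rmult_opp_opp => hsq.
  exact: Rplus_le_lt_0_compat (Rle_0_sqr _) hsq.
rewrite E => hpos hle; have := hle (fun a => ltac:(rewrite /Cnorm2; nra)); lra.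
Qed.
End Coordinates.

(* The projection (z,t) |-> (x,y',t) is a two-coordinate map: coordinate i
   goes to proj_to i at rate proj_rate i (0 for y_n, 1 otherwise); the second
   target proj_aux i is a dummy with rate 0. *)
Section Projection.
Variable n : nat.
Hypothesis hn : (2 <= n)%N.

Definition proj_to (i : option (CT n)) : option (RI n) :=
  if i is Some c then insub c else None.
Definition proj_aux (i : option (CT n)) : option (RI n) :=
  if proj_to i is Some _ then None else Some (xn_coord hn).
Definition proj_rate (i : option (CT n)) : R :=
  if i is Some c then (if (insub c : option (RI n)) is Some _ then 1 else 0) else 1.

Lemma proj_to_aux i : proj_to i != proj_aux i.
Proof. by rewrite /proj_aux; case: (proj_to i). Qed.

Lemma proj_shape i (P : STpt n) h : proj (upd P i (P i + h)) =
  upd (upd (proj P) (proj_to i) (proj P (proj_to i) + proj_rate i * h))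
      (proj_aux i) (proj P (proj_aux i) + 0 * h).
Proof.
rewrite Rmult_0_l Rplus_0_r.
have -> : proj P (proj_aux i) = upd (proj P) (proj_to i) (proj P (proj_to i) + proj_rate i * h) (proj_aux i).
  by rewrite upd_other // eq_sym proj_to_aux.
rewrite upd_id; case: i => [c|] /=; last first.
  by rewrite Rmult_1_l; apply: functional_extensionality => -[o|].
case: (CT_cases hn c) => [->|[c' ->]].
  rewrite insub_yn /= Rmult_0_l Rplus_0_r upd_id.
  by apply: functional_extensionality => -[o|] //; rewrite /proj /= upd_other // val_neq_yn.
rewrite insub_val /= Rmult_1_l.
apply: functional_extensionality => o; rewrite /proj /upd.
by case: o => [o|] //=; rewrite (inj_eq (@Some_inj _)) (inj_eq val_inj).
Qed.

Variables (P0 : STpt n) (r : R).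

Lemma proj_ball (P P' : STpt n) d : ball P d P' -> ball (proj P) d (proj P').
Proof. move=> h o; exact: h. Qed.

Lemma proj_cont (q : STpt n) e : 0 < e ->
  exists d, 0 < d /\ forall q', ball q d q' -> ball (proj q) e (proj q').
Proof. by move=> he; exists e; split=> // q'; exact: proj_ball. Qed.

Lemma Ck_proj k f : Ck k (ball (proj P0) r) f -> Ck k (ball P0 r) (fun P => f (proj P)).
Proof.
exact: (Ck_comp (b := fun _ => 0) (@open_ball _ P0 r) (@open_ball _ (proj P0) r) (fun q => @proj_ball P0 q r)
          proj_cont proj_shape proj_to_aux).
Qed.

Lemma deriv_proj k f i P : ball P0 r P -> Ck k.+1 (ball (proj P0) r) f ->
  has_pderiv (fun P => f (proj P)) i P (proj_rate i * pderiv f (proj_to i) (proj P)).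
Proof.
move=> hP hf; apply: has_pderiv_eqv.
  exact: (comp_deriv (b := fun _ => 0) (@open_ball _ (proj P0) r) (fun q => @proj_ball P0 q r) proj_shape proj_to_aux i hP hf).
by rewrite Rmult_0_l Rplus_0_r.
Qed.

Lemma d2_proj k f i i' P : ball P0 r P -> Ck k.+2 (ball (proj P0) r) f ->
  has_pderiv (pderiv (fun P => f (proj P)) i) i' P
    (proj_rate i * (proj_rate i' * pderiv (pderiv f (proj_to i)) (proj_to i') (proj P))).
Proof.
move=> hP hf; apply: has_pderiv_eqv.
  exact: (comp_d2 (b := fun _ => 0) (@open_ball _ P0 r) (@open_ball _ (proj P0) r) (fun q => @proj_ball P0 q r)
            proj_shape proj_to_aux i i' hP hf).
by rewrite !Rmult_0_l !Rplus_0_r.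
Qed.
End Projection.

Section AffineLift.
Variable n : nat.
Hypothesis hn : (2 <= n)%N.
Variables (s0 : R) (q0 : RSTpt n) (m : RI n -> R).

Definition lift_height (q : RSTpt n) : R :=
  s0 + sumL (enum {: RI n}) (fun c => m c * (q (Some c) - q0 (Some c))).
Definition affine_lift (q : RSTpt n) : STpt n := Defs.lift q (lift_height q).
Definition lift_slope (i : option (RI n)) : R := if i is Some c then m c else 0.
Definition lift_to (i : option (RI n)) : option (CT n) := omap val i.
Definition yn_target (i : option (RI n)) : option (CT n) := Some (yn_coord hn).

Lemma lift_to_neq i : lift_to i != yn_target i.
Proof. by case: i => [c|] //; rewrite /yn_target /= val_neq_yn. Qed.

Lemma lift_height_upd i (q : RSTpt n) h :
  lift_height (upd q i (q i + h)) = lift_height q + lift_slope i * h.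
Proof.
rewrite /lift_height; case: i => [c|] /=; last by rewrite Rmult_0_l Rplus_0_r.
rewrite (@sumL_ext _ _ _ (fun c0 => m c0 * (q (Some c0) - q0 (Some c0))
   + (if c0 == c then m c * h else 0))).
  by rewrite sumL_add sumL_delta ?enum_uniq ?mem_enum // Rplus_assoc.
move=> c0; rewrite /upd (inj_eq (@Some_inj _)).
case: eqP => [->|_] /=; last by rewrite Rplus_0_r.
by have distr x y : m c * (x + h - y) = m c * (x - y) + m c * h by ring; apply: distr.
Qed.

Lemma affine_lift_shape i (q : RSTpt n) h : affine_lift (upd q i (q i + h)) =
  upd (upd (affine_lift q) (lift_to i) (affine_lift q (lift_to i) + 1 * h))
      (yn_target i) (affine_lift q (yn_target i) + lift_slope i * h).
Proof.
rewrite /affine_lift lift_height_upd /yn_target lift_yn.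
apply: functional_extensionality => -[o|]; last first.
  rewrite upd_other //; case: i => [c|] /=; first by rewrite !upd_other.
  by rewrite !upd_same Rmult_1_l.
case: (CT_cases hn o) => [->|[c' ->]]; first by rewrite lift_yn upd_same.
rewrite lift_val [in RHS]upd_other ?val_neq_yn //.
case: i => [c|] /=; last by rewrite !upd_other // lift_val.
rewrite /upd (inj_eq (@Some_inj _)) (inj_eq (@Some_inj _)) (inj_eq val_inj).
by case: eqP => _; rewrite ?insub_val ?Rmult_1_l ?lift_val; reflexivity.
Qed.

Definition slope_norm : R := sumL (enum {: RI n}) (fun c => Rabs (m c)).

Lemma slope_norm_ge0 : 0 <= slope_norm.
Proof. apply: sumL_ge0 => c; exact: Rabs_pos. Qed.

Lemma lift_height_lip (q q' : RSTpt n) d : ball q d q' ->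
  Rabs (lift_height q' - lift_height q) <= slope_norm * d.
Proof.
move=> hb; rewrite /lift_height.
have -> : s0 + sumL (enum {: RI n}) (fun c => m c * (q' (Some c) - q0 (Some c))) -
   (s0 + sumL (enum {: RI n}) (fun c => m c * (q (Some c) - q0 (Some c))))
   = sumL (enum {: RI n}) (fun c => m c * (q' (Some c) - q (Some c))).
  have -> : sumL (enum {: RI n}) (fun c => m c * (q' (Some c) - q (Some c))) =
     sumL (enum {: RI n}) (fun c => m c * (q' (Some c) - q0 (Some c))
                                     + (-1) * (m c * (q (Some c) - q0 (Some c)))).
    by apply: sumL_ext => c; ring.
  by rewrite sumL_add sumL_scal; ring.
apply: Rle_trans (sumL_abs _ _) _; rewrite /slope_norm Rmult_comm -sumL_scal.
apply: sumL_le => c; rewrite Rabs_mult Rmult_comm.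
by apply: Rmult_le_compat_r; [exact: Rabs_pos | have := hb (Some c); lra].
Qed.

Lemma affine_lift_ball (q q' : RSTpt n) e : 0 < e ->
  ball q (e / (slope_norm + 1)) q' -> ball (affine_lift q) e (affine_lift q').
Proof.
move=> he hb; have hM := slope_norm_ge0.
have hde : e / (slope_norm + 1) <= e.
  apply: (Rmult_le_reg_r (slope_norm + 1)); first lra.
  field_simplify; nra.
have hMd : slope_norm * (e / (slope_norm + 1)) < e.
  apply: (Rmult_lt_reg_r (slope_norm + 1)); first lra.
  field_simplify; nra.
move=> -[o|]; last by have := hb None; rewrite /affine_lift /=; lra.
case: (CT_cases hn o) => [->|[c' ->]].
  by rewrite /affine_lift !lift_yn; have := lift_height_lip hb; lra.
by rewrite /affine_lift !lift_val; have := hb (Some c'); lra.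
Qed.

Variable r : R.
Hypothesis hr : 0 < r.
Notation L := affine_lift.
Notation rl := (r / (slope_norm + 1)).

Lemma affine_lift_maps q : ball q0 rl q -> ball (L q0) r (L q).
Proof. exact: affine_lift_ball. Qed.

Lemma affine_lift_cont (q : RSTpt n) e : 0 < e ->
  exists d, 0 < d /\ forall q', ball q d q' -> ball (L q) e (L q').
Proof.
move=> he; exists (e / (slope_norm + 1)); split; last by move=> q'; exact: affine_lift_ball.
by have := slope_norm_ge0; move=> ?; apply: Rdiv_lt_0_compat; lra.
Qed.

Lemma Ck_lift k f : Ck k (ball (L q0) r) f -> Ck k (ball q0 rl) (fun q => f (L q)).
Proof.
exact: (Ck_comp (@open_ball _ q0 rl) (@open_ball _ (L q0) r) affine_lift_maps
          affine_lift_cont affine_lift_shape lift_to_neq).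
Qed.

Lemma pderiv_lift k f i q : ball q0 rl q -> Ck k.+1 (ball (L q0) r) f ->
  pderiv (fun q => f (L q)) i q
  = pderiv f (lift_to i) (L q) + lift_slope i * pderiv f (Some (yn_coord hn)) (L q).
Proof.
move=> hq hf; by rewrite (pderiv_comp (@open_ball _ (L q0) r) affine_lift_maps
  affine_lift_shape lift_to_neq i hq hf) Rmult_1_l.
Qed.

Lemma d2_lift k f i i' q : ball q0 rl q -> Ck k.+2 (ball (L q0) r) f ->
  has_pderiv (pderiv (fun q => f (L q)) i) i' q
    (pderiv (pderiv f (lift_to i)) (lift_to i') (L q)
     + lift_slope i' * pderiv (pderiv f (lift_to i)) (Some (yn_coord hn)) (L q)
     + lift_slope i * pderiv (pderiv f (Some (yn_coord hn))) (lift_to i') (L q)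
     + lift_slope i * lift_slope i'
         * pderiv (pderiv f (Some (yn_coord hn))) (Some (yn_coord hn)) (L q)).
Proof.
move=> hq hf; apply: has_pderiv_eqv.
  exact: (comp_d2 (@open_ball _ q0 rl) (@open_ball _ (L q0) r) affine_lift_maps
            affine_lift_shape lift_to_neq i i' hq hf).
have e (b b' A B C D : R) :
  1 * (1 * A + b' * B) + b * (1 * C + b' * D) = A + b' * B + b * C + b * b' * D by ring.
exact: e.
Qed.
End AffineLift.

Lemma LeviH_neg n (F : STpt n -> R) P r : 0 < r -> Ck 2 (ball P r) F ->
  LeviH (fun Q => -1 * F Q) P = - LeviH F P.
Proof.
move=> hr hF2; have hc := ball_center P hr.
have hF c c' : has_pderiv (pderiv F (Some c')) (Some c) P (pderiv (pderiv F (Some c')) (Some c) P).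
  exact (Ck1_pderiv (Some c) hc (Ck_pderiv (Some c') hF2)).
have hd i Q : ball P r Q -> pderiv (fun Q => -1 * F Q) i Q = -1 * pderiv F i Q.
  by move=> hQ; apply/pderiv_eq/has_pderiv_scal; exact (Ck1_pderiv i hQ hF2).
have hG c c' : has_pderiv (pderiv (fun Q => -1 * F Q) (Some c')) (Some c) P
    (- pderiv (pderiv F (Some c')) (Some c) P).
  apply: (has_pderiv_open (@open_ball _ P r) hc (f := fun Q => -1 * pderiv F (Some c') Q)).
    by move=> Q hQ; rewrite hd.
  by apply: has_pderiv_eqv (has_pderiv_scal (-1) (hF c c')) _; ring.
rewrite (LeviH_real hG) (LeviH_real hF) -levi_real_opp.
congr levi_real; apply: functional_extensionality => c.
by rewrite hd //; ring.
Qed.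

Definition dom_v n (D : (RI n -> R) -> Prop) (P : STpt n) : Prop :=
  D (rspatial (proj P)) /\ 0 < P None.
Definition dom_u n (D : (RI n -> R) -> Prop) (Q : RSTpt n) : Prop :=
  D (rspatial Q) /\ 0 < Q None.

Definition lift0 n (Q0 : RSTpt n) : STpt n := Defs.lift Q0 0.

Lemma proj_lift0 n (Q0 : RSTpt n) : proj (lift0 Q0) = Q0.
Proof. exact: proj_lift. Qed.

Section GraphOfFunction.
Variable n : nat.
Hypothesis hn : (2 <= n)%N.
Variables (phi : RSTpt n -> R) (Q0 : RSTpt n) (r : R).
Hypothesis hr : 0 < r.
Hypothesis hphi : forall k, Ck k (ball Q0 r) phi.

Definition graph_fn (P : STpt n) : R := phi (proj P) + -1 * P (Some (yn_coord hn)).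

Lemma LeviH0_graph_fn : LeviH0 phi Q0 = LeviH graph_fn (lift0 Q0).
Proof.
rewrite /LeviH0; congr LeviH.
by apply: functional_extensionality => P; rewrite /graph_fn yn_eq; ring.
Qed.

Lemma Ck_phi_proj k : Ck k (ball (proj (lift0 Q0)) r) phi.
Proof. by rewrite proj_lift0. Qed.

Lemma Ck_graph_fn k : Ck k (ball (lift0 Q0) r) graph_fn.
Proof.
apply: Ck_add (@open_ball _ _ r) _ _; first exact/(Ck_proj hn)/Ck_phi_proj.
by apply: Ck_scal (@open_ball _ _ r) _; exact: Ck_coord.
Qed.

Lemma deriv_graph_fn i P : ball (lift0 Q0) r P -> has_pderiv graph_fn i P
  (proj_rate i * pderiv phi (proj_to i) (proj P) + -1 * (if Some (yn_coord hn) == i then 1 else 0)).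
Proof.
move=> hP; apply: has_pderiv_add; first exact (deriv_proj hn i hP (Ck_phi_proj 1)).
exact/has_pderiv_scal/has_pderiv_coord.
Qed.

Lemma pderiv_graph_fn i : pderiv graph_fn i (lift0 Q0)
  = proj_rate i * pderiv phi (proj_to i) Q0 - (if Some (yn_coord hn) == i then 1 else 0).
Proof. by rewrite (pderiv_eq (deriv_graph_fn i (ball_center _ hr))) proj_lift0; ring. Qed.

Lemma d2_graph_fn i i' : has_pderiv (pderiv graph_fn i) i' (lift0 Q0)
  (proj_rate i * (proj_rate i' * pderiv (pderiv phi (proj_to i)) (proj_to i') Q0)).
Proof.
have hc := ball_center (lift0 Q0) hr.
apply: (has_pderiv_open (@open_ball _ _ r) hc (f := fun P =>
  pderiv (fun P => phi (proj P)) i P + -1 * (if Some (yn_coord hn) == i then 1 else 0))).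
  move=> P hP; rewrite (pderiv_eq (deriv_graph_fn i hP)).
  by rewrite (pderiv_eq (deriv_proj hn i hP (Ck_phi_proj 1))).
apply: has_pderiv_eqv.
  exact: has_pderiv_add (d2_proj hn i i' hc (Ck_phi_proj 2)) (has_pderiv_scal _ (has_pderiv_const _ _ _)).
by rewrite proj_lift0; ring.
Qed.
End GraphOfFunction.

Section TestFunctionForV.
Variable n : nat.
Hypothesis hn : (2 <= n)%N.
Variables (phi : RSTpt n -> R) (Q0 : RSTpt n) (r : R).
Hypothesis hr : 0 < r.
Hypothesis hphi : forall k, Ck k (ball Q0 r) phi.

Definition Phi (P : STpt n) : R := -1 * graph_fn hn phi P.

Lemma smooth_Phi : smooth_near Phi (lift0 Q0).
Proof.
exists r; split=> // k; apply: Ck_scal (@open_ball _ _ r) _; exact: Ck_graph_fn.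
Qed.

Lemma pderiv_Phi i : pderiv Phi i (lift0 Q0) = - pderiv (graph_fn hn phi) i (lift0 Q0).
Proof.
have hg : has_pderiv (graph_fn hn phi) i (lift0 Q0) (pderiv (graph_fn hn phi) i (lift0 Q0)).
  by apply: pderiv_spec; eexists; exact: deriv_graph_fn (ball_center _ hr).
by apply/pderiv_eq/(has_pderiv_eqv (has_pderiv_scal (-1) hg)); ring.
Qed.

Lemma dt_Phi : dt Phi (lift0 Q0) = - dt phi Q0.
Proof. by rewrite /dt pderiv_Phi (pderiv_graph_fn hn hr hphi) /= Rmult_1_l Rminus_0_r. Qed.

Lemma grad2_Phi : grad2 Phi (lift0 Q0) <> 0.
Proof.
apply: (@grad2_neq0 _ hn); rewrite pderiv_Phi (pderiv_graph_fn hn hr hphi) eqxx /proj_rate insub_yn.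
lra.
Qed.

Lemma LeviH_Phi : LeviH Phi (lift0 Q0) = - LeviH0 phi Q0.
Proof. by rewrite /Phi (LeviH_neg hr (Ck_graph_fn hn hphi 2)) (LeviH0_graph_fn hn). Qed.
End TestFunctionForV.

Lemma weak_sol_H_to_H0 n (hn : (2 <= n)%N) (D : (RI n -> R) -> Prop) (u : RSTpt n -> R) :
  cont_on (dom_u D) u ->
  weak_sol_H (dom_v D) (fun P => yn P - u (proj P)) -> weak_sol_H0 (dom_u D) u.
Proof.
move=> hu [_ Hv]; split => // phi Q0 hQ0 [r [hr hphi]].
have hP0 : dom_v D (lift0 Q0) by rewrite /dom_v proj_lift0.
have [HM Hm] := Hv _ _ hP0 (smooth_Phi hn hr hphi).
(* v - Phi = (phi - u) o proj, so extrema of u - phi become reversed ones of v - Phi *)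
have ev P : (yn P - u (proj P)) - Phi hn phi P = - (u (proj P) - phi (proj P)).
  by rewrite /Phi /graph_fn yn_eq; ring.
have hball rho P : ball (lift0 Q0) rho P -> ball Q0 rho (proj P).
  by move=> hb; rewrite -(proj_lift0 Q0); exact: proj_ball.
have hgrad : grad2 (Phi hn phi) (lift0 Q0) <> 0 := grad2_Phi hr hphi.
split=> -[rho [hrho hext]].
- have hmin : loc_min (dom_v D) (fun P => yn P - u (proj P) - Phi hn phi P) (lift0 Q0).
    exists rho; split=> // P hP hb; rewrite !ev proj_lift0.
    have := hext _ hP (hball rho P hb); lra.
  have [H _] := Hm hmin; have := H hgrad.
  rewrite (dt_Phi hn hr hphi) (LeviH_Phi hn hr hphi); lra.
- have hmax : loc_max (dom_v D) (fun P => yn P - u (proj P) - Phi hn phi P) (lift0 Q0).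
    exists rho; split=> // P hP hb; rewrite !ev proj_lift0.
    have := hext _ hP (hball rho P hb); lra.
  have [H _] := HM hmax; have := H hgrad.
  rewrite (dt_Phi hn hr hphi) (LeviH_Phi hn hr hphi); lra.
Qed.

Lemma deriv_zero_at_max (g : R -> R) x l r : 0 < r -> derivable_pt_lim g x l ->
  (forall y, Rabs (y - x) < r -> g y <= g x) -> l = 0.
Proof.
move=> hr hd hm; pose pr : derivable_pt g x := exist _ l hd.
rewrite -(derive_pt_eq_0 _ _ _ pr hd).
apply: (deriv_maximum _ (x - r) (x + r)) => [||y h1 h2]; try lra.
by apply: hm; apply: Rabs_def1; lra.
Qed.

Section GraphFunction.
Variable n : nat.
Hypothesis hn : (2 <= n)%N.
Variables (D : (RI n -> R) -> Prop) (u : RSTpt n -> R).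
Notation v := (fun P : STpt n => yn P - u (proj P)).

Lemma cont_graph : cont_on (dom_u D) u -> cont_on (dom_v D) v.
Proof.
move=> hu P hP e he; have [d [hd H]] := hu (proj P) hP (e / 2) ltac:(lra).
exists (Rmin d (e / 2)); split=> [|P' hP' hb]; first by apply: Rmin_glb_lt => //; lra.
have h1 := H (proj P') hP' (proj_ball (ball_mono (Rmin_l _ _) hb)).
have h2 := ball_mono (Rmin_r _ _) hb (Some (yn_coord hn)).
rewrite !(yn_eq hn).
have -> : P' (Some (yn_coord hn)) - u (proj P') - (P (Some (yn_coord hn)) - u (proj P))
   = (P' (Some (yn_coord hn)) - P (Some (yn_coord hn))) - (u (proj P') - u (proj P)) by ring.
apply: Rle_lt_trans (Rabs_triang _ _) _; rewrite Rabs_Ropp; lra.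
Qed.

(* If phi touches v from above (sg = 1) or below (sg = -1) at P0, then
   dphi/dy_n (P0) = 1, since v is affine in y_n with slope 1. *)
Lemma touching_slope_yn (phi : STpt n -> R) P0 l (sg : R) rho : 0 < rho -> dom_v D P0 ->
  has_pderiv phi (Some (yn_coord hn)) P0 l ->
  (forall P, dom_v D P -> ball P0 rho P -> sg * (v P - phi P) <= sg * (v P0 - phi P0)) ->
  sg <> 0 -> l = 1.
Proof.
move=> hrho hP0 hl hm hsg; pose s0 := P0 (Some (yn_coord hn)).
have hd : derivable_pt_lim (fun s => sg * (s - u (proj P0) - phi (upd P0 (Some (yn_coord hn)) s)))
    s0 (sg * (1 - 0 - l)).
  apply/derivable_pt_lim_scal/derivable_pt_lim_minus; last exact: hl.
  exact: derivable_pt_lim_minus (derivable_pt_lim_id _) (derivable_pt_lim_const _ _).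
suff /Rmult_integral [] : sg * (1 - 0 - l) = 0 by [|lra].
apply: (deriv_zero_at_max hrho hd) => y hy.
have hb : ball P0 rho (upd P0 (Some (yn_coord hn)) y) by exact: ball_upd.
have hO : dom_v D (upd P0 (Some (yn_coord hn)) y) by rewrite /dom_v proj_upd_yn.
by move: (hm _ hO hb); rewrite proj_upd_yn yn_upd_yn (yn_eq hn) upd_id; exact.
Qed.
End GraphFunction.

(* From a test function phi(z,t) for v at P0 to the test function
   psi = y_n o L - phi o L - M for u at proj P0, where L is the affine lift
   whose slope is the gradient of phi at P0 with its y-components negated. *)
Section TestFunctionForU.
Variable n : nat.
Hypothesis hn : (2 <= n)%N.
Variables (phi : STpt n -> R) (P0 : STpt n) (r M : R).
Hypothesis hr : 0 < r.
Hypothesis hphi : forall k, Ck k (ball P0 r) phi.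

Definition grad_phi (c : CT n) : R := pderiv phi (Some c) P0.
Definition conj_grad (c : CT n) : R := if c.1 then - grad_phi c else grad_phi c.
Definition slope (x : RI n) : R := conj_grad (val x).
Definition Lphi : RSTpt n -> STpt n := affine_lift (yn P0) (proj P0) slope.
Definition shifted (P : STpt n) : R := P (Some (yn_coord hn)) + -1 * phi P + - M.
Definition psi (q : RSTpt n) : R := shifted (Lphi q).
Definition psi_rad : R := r / (slope_norm slope + 1).

Lemma psi_rad_pos : 0 < psi_rad.
Proof. by have := slope_norm_ge0 slope; rewrite /psi_rad => ?; apply: Rdiv_lt_0_compat; lra. Qed.

Lemma Lphi_center : Lphi (proj P0) = P0.
Proof.
rewrite /Lphi /affine_lift (_ : lift_height _ _ _ _ = yn P0) ?lift_proj //.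
rewrite /lift_height (@sumL_ext _ _ _ (fun _ => 0)) ?sumL_zero; first ring.
by move=> c; ring.
Qed.

Lemma Ck_shifted k : Ck k (ball (Lphi (proj P0)) r) shifted.
Proof.
rewrite Lphi_center; apply: Ck_add (@open_ball _ P0 r) _ (Ck_const _ _ _).
apply: Ck_add (@open_ball _ P0 r) (Ck_coord _ _ _) _.
by apply: Ck_scal (@open_ball _ P0 r) _.
Qed.

Lemma Ck_psi k : Ck k (ball (proj P0) psi_rad) psi.
Proof. exact: (Ck_lift hn hr (Ck_shifted k)). Qed.

Lemma smooth_psi : smooth_near psi (proj P0).
Proof. by exists psi_rad; split; [exact: psi_rad_pos | exact: Ck_psi]. Qed.

Lemma pderiv_shifted i P : ball P0 r P ->
  pderiv shifted i P = (if Some (yn_coord hn) == i then 1 else 0) - pderiv phi i P.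
Proof.
move=> hP; apply: pderiv_eq.
have hs := has_pderiv_add (has_pderiv_add (has_pderiv_coord (Some (yn_coord hn)) i P)
  (has_pderiv_scal (-1) (Ck1_pderiv i hP (hphi 1)))) (has_pderiv_const (- M) i P).
by apply: has_pderiv_eqv hs _; ring.
Qed.

Lemma d2_shifted i j : pderiv (pderiv shifted i) j P0 = - pderiv (pderiv phi i) j P0.
Proof.
have hc := ball_center P0 hr; apply: pderiv_eq.
apply: (has_pderiv_open (@open_ball _ P0 r) hc
  (f := fun P => (if Some (yn_coord hn) == i then 1 else 0) + -1 * pderiv phi i P)).
  by move=> P hP; rewrite pderiv_shifted //; ring.
apply: has_pderiv_eqv (has_pderiv_add (has_pderiv_const _ _ _)
  (has_pderiv_scal (-1) (Ck1_pderiv j hc (Ck_pderiv i (hphi 2))))) _; ring.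
Qed.

Lemma hc_psi : ball (proj P0) psi_rad (proj P0).
Proof. exact: ball_center psi_rad_pos. Qed.

Lemma dt_psi : dt psi (proj P0) = - dt phi P0.
Proof.
rewrite /dt /psi (pderiv_lift hn hr None hc_psi (Ck_shifted 1)) -/Lphi Lphi_center.
rewrite pderiv_shifted; last exact: ball_center.
by rewrite /= Rmult_0_l Rplus_0_r Rminus_0_l.
Qed.

Lemma d2_psi (x x' : RI n) : has_pderiv (pderiv psi (Some x)) (Some x') (proj P0)
  (- (pderiv (pderiv phi (Some (val x))) (Some (val x')) P0
      + slope x' * pderiv (pderiv phi (Some (val x))) (Some (yn_coord hn)) P0
      + slope x * pderiv (pderiv phi (Some (yn_coord hn))) (Some (val x')) P0
      + slope x * slope x' * pderiv (pderiv phi (Some (yn_coord hn))) (Some (yn_coord hn)) P0)).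
Proof.
apply: has_pderiv_eqv (d2_lift hn hr (Some x) (Some x') hc_psi (Ck_shifted 2)) _.
rewrite -/Lphi Lphi_center /= !d2_shifted.
have e A B C D b b' : - A + b' * - B + b * - C + b * b' * - D = - (A + b' * B + b * C + b * b' * D) by ring.
exact: e.
Qed.

(* From here on phi touches v, so that dphi/dy_n (P0) = 1. *)
Hypothesis hpy : pderiv phi (Some (yn_coord hn)) P0 = 1.

Lemma pderiv_psi (x : RI n) : pderiv psi (Some x) (proj P0) = - grad_phi (val x).
Proof.
rewrite /psi (pderiv_lift hn hr (Some x) hc_psi (Ck_shifted 1)) -/Lphi Lphi_center.
rewrite !pderiv_shifted ?hpy ?eqxx /grad_phi; try exact: ball_center.
by rewrite /= eq_sym val_neq_yn; ring.
Qed.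

Lemma conj_grad_yn : conj_grad (yn_coord hn) = -1.
Proof. by rewrite /conj_grad /= /grad_phi hpy. Qed.

Lemma pderiv_graph_psi c : pderiv (graph_fn hn psi) (Some c) (lift0 (proj P0)) = - grad_phi c.
Proof.
rewrite (pderiv_graph_fn hn psi_rad_pos Ck_psi).
case: (CT_cases hn c) => [->|[x ->]].
  by rewrite /proj_rate insub_yn eqxx /grad_phi hpy; ring.
rewrite /proj_rate /= insub_val pderiv_psi ifF; first by rewrite Rmult_1_l Rminus_0_r.
by rewrite eq_sym; exact: val_neq_yn.
Qed.

Lemma d2_graph_psi c c' : has_pderiv (pderiv (graph_fn hn psi) (Some c')) (Some c) (lift0 (proj P0))
  (- (pderiv (pderiv phi (Some c')) (Some c) P0
      + conj_grad c * pderiv (pderiv phi (Some c')) (Some (yn_coord hn)) P0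
      + pderiv (pderiv phi (Some (yn_coord hn))) (Some c) P0 * conj_grad c'
      + pderiv (pderiv phi (Some (yn_coord hn))) (Some (yn_coord hn)) P0 * conj_grad c * conj_grad c')).
Proof.
apply: has_pderiv_eqv (d2_graph_fn hn psi_rad_pos Ck_psi _ _) _.
case: (CT_cases hn c') => [->|[x' ->]].
  rewrite conj_grad_yn /proj_rate insub_yn.
  have e (A B E X : R) : 0 * X = - (A + E * B + A * -1 + B * E * -1) by ring.
  exact: e.
case: (CT_cases hn c) => [->|[x ->]].
  rewrite conj_grad_yn /proj_rate insub_yn insub_val.
  have e (A B E X : R) : 1 * (0 * X) = - (A + -1 * A + B * E + B * -1 * E) by ring.
  exact: e.
rewrite /proj_rate /proj_to !insub_val (pderiv_eq (d2_psi x' x)).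
have e (A B C D a b : R) :
  1 * (1 * - (A + a * B + b * C + b * a * D)) = - (A + a * B + C * b + D * a * b) by ring.
exact: e.
Qed.

Lemma LeviH0_psi : LeviH0 psi (proj P0) = - LeviH phi P0.
Proof.
have hphi2 c c' : has_pderiv (pderiv phi (Some c')) (Some c) P0 (pderiv (pderiv phi (Some c')) (Some c) P0).
  exact (Ck1_pderiv (Some c) (ball_center P0 hr) (Ck_pderiv (Some c') (hphi 2))).
have hg : sumR (fun a => Cnorm2 (zvec grad_phi a)) <> 0.
  by apply: (@grad2_neq0 _ hn phi P0); rewrite hpy; lra.
rewrite (LeviH0_graph_fn hn) (LeviH_real d2_graph_psi) (LeviH_real hphi2).
have -> : (fun c => pderiv (graph_fn hn psi) (Some c) (lift0 (proj P0))) = (fun c => - grad_phi c).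
  by apply: functional_extensionality => c; exact: pderiv_graph_psi.
rewrite levi_real_opp; congr Ropp.
pose D c c' := pderiv (pderiv phi (Some c)) (Some c') P0.
exact (@levi_real_rank1_invariant n grad_phi (fun c c' => D c' c) conj_grad
  (fun c' => D c' (yn_coord hn)) (fun c => D (yn_coord hn) c) (D (yn_coord hn) (yn_coord hn))
  (fun a => erefl) (fun a => erefl) hg).
Qed.
End TestFunctionForU.

Lemma weak_sol_H0_to_H n (hn : (2 <= n)%N) (D : (RI n -> R) -> Prop) (u : RSTpt n -> R) :
  cont_on (dom_u D) u ->
  weak_sol_H0 (dom_u D) u -> weak_sol_H (dom_v D) (fun P => yn P - u (proj P)).
Proof.
move=> hu [_ Hu]; split; first exact: cont_graph.
move=> phi P0 hP0 [r [hr hphi]].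
have hl := Ck1_pderiv (Some (yn_coord hn)) (ball_center P0 hr) (hphi 1%nat).
pose M := (yn P0 - u (proj P0)) - phi P0.
have [HM Hm] := Hu _ _ hP0 (smooth_psi hn M hr hphi).
(* u - psi = M - (v - phi) o Lphi, so extrema of v - phi become reversed ones of u - psi *)
have ev Q : u Q - psi hn phi P0 M Q
    = M - ((yn (Lphi phi P0 Q) - u (proj (Lphi phi P0 Q))) - phi (Lphi phi P0 Q)).
  by rewrite /psi /shifted (yn_eq hn) proj_lift; ring.
have hL rho Q : 0 < rho -> ball (proj P0) (rho / (slope_norm (slope phi P0) + 1)) Q ->
    dom_u D Q -> dom_v D (Lphi phi P0 Q) /\ ball P0 rho (Lphi phi P0 Q).
  move=> hrho hb hQ; split; first by rewrite /dom_v proj_lift.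
  by rewrite -{1}(Lphi_center hn phi P0); exact: affine_lift_ball hb.
have hrad rho : 0 < rho -> 0 < rho / (slope_norm (slope phi P0) + 1).
  by move=> hrho; apply: Rdiv_lt_0_compat => //; have := slope_norm_ge0 (slope phi P0); lra.
have hgrad (hpy : pderiv phi (Some (yn_coord hn)) P0 = 1) : grad2 phi P0 <> 0 by apply: (@grad2_neq0 _ hn); rewrite hpy; lra.
split=> -[rho [hrho hext]].
- have hpy : pderiv phi (Some (yn_coord hn)) P0 = 1.
    apply: (touching_slope_yn (u := u) hrho hP0 hl (sg := 1)) => [P hP hb|]; last lra.
    by have := hext P hP hb; lra.
  have hmin : loc_min (dom_u D) (fun Q => u Q - psi hn phi P0 M Q) (proj P0).
    exists (rho / (slope_norm (slope phi P0) + 1)); split=> [|Q hQ hb]; first exact: hrad.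
    have [hO hB] := hL rho Q hrho hb hQ; rewrite !ev (Lphi_center hn).
    by have := hext _ hO hB; lra.
  have := Hm hmin; rewrite (dt_psi hn M hr hphi) (LeviH0_psi M hr hphi hpy).
  by split=> [_|/(hgrad hpy)]; lra.
- have hpy : pderiv phi (Some (yn_coord hn)) P0 = 1.
    apply: (touching_slope_yn (u := u) hrho hP0 hl (sg := -1)) => [P hP hb|]; last lra.
    by have := hext P hP hb; lra.
  have hmax : loc_max (dom_u D) (fun Q => u Q - psi hn phi P0 M Q) (proj P0).
    exists (rho / (slope_norm (slope phi P0) + 1)); split=> [|Q hQ hb]; first exact: hrad.
    have [hO hB] := hL rho Q hrho hb hQ; rewrite !ev (Lphi_center hn).
    by have := hext _ hO hB; lra.
  have := HM hmax; rewrite (dt_psi hn M hr hphi) (LeviH0_psi M hr hphi hpy).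
  by split=> [_|/(hgrad hpy)]; lra.
Qed.

Theorem lemma3p2 (n : nat) (hn : (2 <= n)%N)
  (D : (RI n -> R) -> Prop) (u : RSTpt n -> R) :
  domain D ->
  cont_on (fun Q : RSTpt n => D (rspatial Q) /\ 0 < Q None) u ->
  (weak_sol_H (fun P : STpt n => D (rspatial (proj P)) /\ 0 < P None)
               (fun P => yn P - u (proj P))
   <->
   weak_sol_H0 (fun Q : RSTpt n => D (rspatial Q) /\ 0 < Q None) u).
Proof.
move=> _ hu; split.
- exact: (weak_sol_H_to_H0 hn hu).
- exact: (weak_sol_H0_to_H hn hu).
Qed.
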